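(* Let $P_{n+1}$ be a subset of $\mathbb{S}^{n+1}$ for which there is a point $a\in P_{n+1}$ such that (1) every rotation of $\mathbb{S}^{n+1}$ at $a$ (i.e. fixing $a$) preserves $P_{n+1}$, and (2) for every great $n$-sphere $\mathbb{S}^n\subseteq\mathbb{S}^{n+1}$ containing both $a$ and its antipode $\bar a$ (a slice under the rotations at $a$), the set $P_{n+1}\cap\mathbb{S}^n$ is admissible in $\mathbb{S}^n$. Then $P_{n+1}$ is admissible in $\mathbb{S}^{n+1}$.
   Context: Spheres carry their geodesic (great-circle) metrics; a great $n$-sphere in $\mathbb{S}^{n+1}$ carries its intrinsic geodesic metric. For a metric space $X$, $\Delta(X)=\{f:X\to\mathbb{R}\text{ bounded}:f(x)+f(x')\ge d_X(x,x')\}$ and the tight span $\mathbf{E}(X)$ is the set of pointwise-minimal elements of $\Delta(X)$. A subset $P$ of a sphere $\mathbb{S}^m$ is admissible if the function $x\mapsto d_{\mathbb{S}^m}(x,P)+\frac12\mathrm{diam}(P)$ belongs to $\mathbf{E}(\mathbb{S}^m)$, where $d_{\mathbb{S}^m}(x,P)=\inf_{p\in P}d_{\mathbb{S}^m}(x,p)$. *)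

(* Spheres S^m are the unit spheres of R^(m+1)
   (row vectors 'rV[R]_m.+1) with the great-circle metric acos <x,y>. *)
From HB Require Import structures.
From mathcomp Require Import all_boot all_order all_algebra.
From mathcomp Require Import all_classical all_reals all_analysis.
Set Implicit Arguments. Unset Strict Implicit. Unset Printing Implicit Defensive.
Import Order.TTheory GRing.Theory Num.Theory.
Local Open Scope classical_set_scope.
Local Open Scope ring_scope.

Section Defs.
Variable R : realType.

Definition dotp (k : nat) (u v : 'rV[R]_k) : R := (u *m v^T) 0 0.

Definition sphere (m : nat) : set 'rV[R]_m.+1 := [set x | dotp x x = 1].

Definition gdist (k : nat) (x y : 'rV[R]_k) : R := acos (dotp x y).

Definition dist_to (k : nat) (P : set 'rV[R]_k) (x : 'rV[R]_k) : R :=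
  inf [set gdist x p | p in P].

Definition diam (k : nat) (P : set 'rV[R]_k) : R :=
  sup [set gdist pq.1 pq.2 | pq in P `*` P].

(* Delta(X) for the metric subspace X (metric = restriction of gdist);
   functions on X are represented as functions on the ambient space,
   only their values on X matter. *)
Definition Delta (k : nat) (X : set 'rV[R]_k) (f : 'rV[R]_k -> R) : Prop :=
  (exists M : R, forall x, X x -> `|f x| <= M) /\
  (forall x y, X x -> X y -> gdist x y <= f x + f y).

Definition tight_span (k : nat) (X : set 'rV[R]_k) (f : 'rV[R]_k -> R) : Prop :=
  Delta X f /\
  (forall g, Delta X g -> (forall x, X x -> g x <= f x) ->
     forall x, X x -> g x = f x).

Definition admissible (k : nat) (X P : set 'rV[R]_k) : Prop :=
  tight_span X (fun x => dist_to P x + diam P / 2).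

(* rotations of R^k (acting on row vectors by x |-> x *m M) *)
Definition rotation (k : nat) (M : 'M[R]_k) : Prop :=
  M *m M^T = 1%:M /\ \det M = 1.

Definition great_sphere (m j : nat) (V : 'M[R]_(j, m.+1)) : set 'rV[R]_m.+1 :=
  [set x | @sphere m x /\ (x <= V)%MS].

End Defs.

From HB Require Import structures.
From mathcomp Require Import all_boot all_order all_algebra.
From mathcomp Require Import all_classical all_reals all_analysis.
From mathcomp Require Import ring lra zify.
Set Implicit Arguments. Unset Strict Implicit. Unset Printing Implicit Defensive.
Import Order.TTheory GRing.Theory Num.Theory.
Local Open Scope classical_set_scope.
Local Open Scope ring_scope.

(* Every point of the sphere lies on a slice through [a] and [-a], and on such a
   slice [V] the function [d(., P) + diam P / 2] coincides with the one of
   [P ∩ V]: rotations about [a] move any point of [P] along its parallel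
   (keeping its height [<p, a>]) onto a meridian of [V], and a point of a
   given height is closest to [x] on the meridian of [x] and farthest on the
   opposite one. So [d(., P) = d(., P ∩ V)] on [V] and [diam P = diam (P ∩ V)].
   Minimality of the function then follows slice by slice from the
   admissibility of the slices; for the triangle inequality at [x, y], rotate
   [y] about [a] onto the meridian opposite to [x], which leaves its value
   unchanged and can only increase its distance to [x]. *)

Section Dotp.
Variables (R : realType) (k : nat).
Implicit Types (u v w : 'rV[R]_k) (c : R).

Lemma dotpE u v : dotp u v = \sum_i u 0 i * v 0 i.
Proof. by rewrite /dotp !mxE; apply: eq_bigr => i _; rewrite mxE. Qed.

Lemma dotpC u v : dotp u v = dotp v u.
Proof. by rewrite !dotpE; apply: eq_bigr => i _; rewrite mulrC. Qed.

Lemma dotpDl u v w : dotp (u + v) w = dotp u w + dotp v w.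
Proof. by rewrite !dotpE -big_split; apply: eq_bigr => i _; rewrite mxE mulrDl. Qed.

Lemma dotpZl c u w : dotp (c *: u) w = c * dotp u w.
Proof. by rewrite !dotpE mulr_sumr; apply: eq_bigr => i _; rewrite mxE mulrA. Qed.

Lemma dotpNl u w : dotp (- u) w = - dotp u w.
Proof. by rewrite -scaleN1r dotpZl mulN1r. Qed.

Lemma dotpBl u v w : dotp (u - v) w = dotp u w - dotp v w.
Proof. by rewrite dotpDl dotpNl. Qed.

Lemma dotpDr u v w : dotp w (u + v) = dotp w u + dotp w v.
Proof. by rewrite !(dotpC w) dotpDl. Qed.

Lemma dotpZr c u w : dotp w (c *: u) = c * dotp w u.
Proof. by rewrite !(dotpC w) dotpZl. Qed.

Lemma dotpNr u w : dotp w (- u) = - dotp w u.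
Proof. by rewrite !(dotpC w) dotpNl. Qed.

Lemma dotpBr u v w : dotp w (u - v) = dotp w u - dotp w v.
Proof. by rewrite !(dotpC w) dotpBl. Qed.

Lemma dotpvv_ge0 u : 0 <= dotp u u.
Proof. by rewrite dotpE; apply: sumr_ge0 => i _; rewrite -expr2 sqr_ge0. Qed.

Lemma dotpvv_eq0 u : (dotp u u == 0) = (u == 0).
Proof.
apply/idP/eqP => [|->]; last by rewrite -(scale0r 0) dotpZl mul0r.
rewrite dotpE psumr_eq0 => [/allP u0|i _]; last by rewrite -expr2 sqr_ge0.
apply/rowP => i; rewrite mxE; apply/eqP.
by have /implyP/(_ isT) := u0 i (mem_index_enum _); rewrite mulf_eq0 orbb.
Qed.

Lemma dotpvv_gt0 u : (0 < dotp u u) = (u != 0).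
Proof. by rewrite lt_def dotpvv_ge0 dotpvv_eq0 andbT. Qed.

Lemma dotpNN u : dotp (- u) (- u) = dotp u u.
Proof. by rewrite dotpNl dotpNr opprK. Qed.

Lemma dotp_unit_bound u v : dotp u u = 1 -> dotp v v = 1 -> -1 <= dotp u v <= 1.
Proof.
move=> hu hv; have h1 := dotpvv_ge0 (u - v); have h2 := dotpvv_ge0 (u + v).
rewrite !dotpBl !dotpBr (dotpC v u) hu hv in h1.
rewrite !dotpDl !dotpDr (dotpC v u) hu hv in h2.
apply/andP; split; lra.
Qed.

Lemma sub_kermx_tr u v : (u <= kermx v^T)%MS = (dotp u v == 0).
Proof.
rewrite sub_kermx /dotp; apply/eqP/eqP => [->|uv0]; first by rewrite mxE.
by apply/rowP => i; rewrite ord1 [RHS]mxE -uv0.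
Qed.

Definition normalize u := (Num.sqrt (dotp u u))^-1 *: u.

Lemma normalize_unit u : u != 0 -> dotp (normalize u) (normalize u) = 1.
Proof.
rewrite -dotpvv_gt0 => u_gt0.
rewrite dotpZl dotpZr mulrA -expr2 exprVn sqr_sqrtr ?ltW // mulVf //.
by rewrite gt_eqF.
Qed.

End Dotp.

Section Isometries.
Variables (R : realType) (k : nat).
Implicit Types x z : 'rV[R]_k.

Lemma det_1_sub_rank1 z (c : R) :
  \det (1%:M - c *: (z^T *m z)) = 1 - c * (z *m z^T) 0 0.
Proof.
(* Both sides are the determinant of the block matrix [1, z; c z^T, 1]. *)
pose X := block_mx (1%:M : 'M[R]_1) z (c *: z^T) (1%:M : 'M[R]_k).
have E1 : X = block_mx 1%:M 0 (c *: z^T) 1%:M *m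
              block_mx 1%:M z 0 (1%:M - c *: (z^T *m z)).
  rewrite mulmx_block ?mul1mx ?mulmx1 ?mul0mx ?mulmx0 ?addr0 ?add0r.
  by rewrite -scalemxAl addrC subrK.
have E2 : X = block_mx 1%:M z 0 1%:M *m
              block_mx (1%:M - c *: (z *m z^T)) 0 (c *: z^T) 1%:M.
  rewrite mulmx_block ?mul1mx ?mulmx1 ?mul0mx ?mulmx0 ?addr0 ?add0r.
  by rewrite -scalemxAr subrK.
have := congr1 determinant E1; rewrite E2 !det_mulmx det_lblock det_ublock.
rewrite det_ublock det_lblock !det1 !mul1r !mulr1 det_mx11 => <-.
by rewrite !mxE eqxx /= mulr1n.
Qed.

Definition refl z : 'M[R]_k := 1%:M - (2 / dotp z z) *: (z^T *m z).

Lemma refl_apply x z : x *m refl z = x - (2 * dotp x z / dotp z z) *: z.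
Proof.
rewrite /refl mulmxBr mulmx1 -scalemxAr mulmxA (mx11_scalar (x *m z^T)).
by rewrite mul_scalar_mx scalerA -/(dotp x z) mulrAC.
Qed.

Lemma refl_fix x z : dotp x z = 0 -> x *m refl z = x.
Proof. by move=> xz; rewrite refl_apply xz mulr0 mul0r scale0r subr0. Qed.

Lemma refl_swap x y : dotp x x = dotp y y -> x != y -> x *m refl (x - y) = y.
Proof.
move=> xy nxy.
have dd : dotp (x - y) (x - y) = 2 * dotp x (x - y).
  by rewrite !dotpBl !dotpBr xy (dotpC y x); ring.
have nz : 2 * dotp x (x - y) != 0 by rewrite -dd dotpvv_eq0 subr_eq0.
by rewrite refl_apply dd divff // scale1r opprB addrC subrK.
Qed.

Lemma reflK x z : z != 0 -> x *m refl z *m refl z = x.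
Proof.
rewrite -dotpvv_eq0 => nz; rewrite !refl_apply dotpBl dotpZl.
set d := dotp z z; set t := dotp x z.
have -> : 2 * (t - 2 * t / d * d) / d = - (2 * t / d) by field.
by rewrite scaleNr opprK subrK.
Qed.

Lemma trmx_refl z : (refl z)^T = refl z.
Proof. by rewrite /refl linearB /= trmx1 linearZ /= trmx_mul trmxK. Qed.

Lemma refl_orthogonal z : z != 0 -> refl z *m (refl z)^T = 1%:M.
Proof.
move=> nz; rewrite trmx_refl; apply/row_matrixP => i.
by rewrite row_mul rowE reflK // rowE mulmx1.
Qed.

Lemma det_refl z : z != 0 -> \det (refl z) = -1.
Proof.
rewrite -dotpvv_eq0 => nz; rewrite /refl det_1_sub_rank1 -/(dotp z z) divfK //.
lra.
Qed.

Lemma rotation_refl2 y z : y != 0 -> z != 0 -> rotation (refl y *m refl z).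
Proof.
move=> ny nz; split; last by rewrite det_mulmx !det_refl // mulrNN mulr1.
rewrite trmx_mul mulmxA -(mulmxA (refl y)) refl_orthogonal // mulmx1.
exact: refl_orthogonal.
Qed.

Lemma rotation1 : rotation (1%:M : 'M[R]_k).
Proof. by split; rewrite ?trmx1 ?mulmx1 ?det1. Qed.

Lemma rotation_tr (M : 'M[R]_k) : rotation M -> rotation M^T.
Proof. by case=> MMT detM; split; rewrite ?trmxK ?det_tr // mulmx1C. Qed.

Lemma rotation_fix_tr (M : 'M[R]_k) x : rotation M -> x *m M = x -> x *m M^T = x.
Proof. by case=> MMT _ xM; rewrite -{1}xM -mulmxA MMT mulmx1. Qed.

Lemma dotp_rotation (M : 'M[R]_k) x y : rotation M -> dotp (x *m M) (y *m M) = dotp x y.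
Proof. by case=> MMT _; rewrite /dotp trmx_mul mulmxA -(mulmxA x) MMT mulmx1. Qed.

End Isometries.

Lemma acos_antitone (R : realType) (s t : R) :
  -1 <= s <= 1 -> -1 <= t <= 1 -> s <= t -> acos t <= acos s.
Proof.
move=> hs ht st; rewrite leNgt; apply/negP => lt.
have := lt; rewrite -ltr_cos ?in_itv /= ?acos_ge0 ?acos_lepi //.
rewrite !acosK ?in_itv //=; lra.
Qed.

Section Meridian.
Variables (R : realType) (k : nat).
Implicit Types (a u x y : 'rV[R]_k) (s t : R).

(* For orthonormal [a] and [u]: the point of height [t] (i.e. with
   [dotp _ a = t]) on the half great circle from [-a] to [a] through [u]. *)
Definition meridian a u t := t *: a + Num.sqrt (1 - t ^+ 2) *: u.

Lemma meridian_sub j (V : 'M[R]_(j, k)) a u t :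
  (a <= V)%MS -> (u <= V)%MS -> (meridian a u t <= V)%MS.
Proof. by move=> aV uV; rewrite addmx_sub ?scalemx_sub. Qed.

Lemma meridian_mulmx (M : 'M[R]_k) a u t :
  meridian a u t *m M = meridian (a *m M) (u *m M) t.
Proof. by rewrite mulmxDl -!scalemxAl. Qed.

Lemma dotp_meridian a u s y :
  dotp (meridian a u s) y = s * dotp a y + Num.sqrt (1 - s ^+ 2) * dotp u y.
Proof. by rewrite dotpDl !dotpZl. Qed.

Lemma exists_unit_orth_sub j (V : 'M[R]_(j, k)) a : (1 < \rank V)%N ->
  exists u, [/\ dotp u u = 1, dotp u a = 0 & (u <= V)%MS].
Proof.
move=> rV; pose W := (V :&: kermx a^T)%MS.
have rW : (0 < \rank W)%N.
  have := mxrank_sum_cap V (kermx a^T); rewrite mxrank_ker mxrank_tr -/W.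
  have := rank_leq_col (V + kermx a^T)%MS; have := rank_leq_row a; lia.
have nW : W != 0 by apply: contraTneq rW => ->; rewrite mxrank0.
have Wsub : (nz_row W <= W)%MS := nz_row_sub W.
exists (normalize (nz_row W)); split.
- by rewrite normalize_unit // nz_row_eq0.
- by apply/eqP; rewrite -sub_kermx_tr scalemx_sub // (submx_trans Wsub) ?capmxSr.
- by rewrite scalemx_sub // (submx_trans Wsub) ?capmxSl.
Qed.

Section Frame.
Variables a u : 'rV[R]_k.
Hypotheses (ha : dotp a a = 1) (hu : dotp u u = 1) (ua : dotp u a = 0).

Lemma meridian_unit t : -1 <= t <= 1 -> dotp (meridian a u t) (meridian a u t) = 1.
Proof.
move=> /andP[t_geN1 t_le1]; have t2 : 0 <= 1 - t ^+ 2 by nra.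
rewrite !dotp_meridian !dotpDr !dotpZr ha hu ua (dotpC a u) ua.
by rewrite !mulr0 add0r !addr0 !mulr1 -!expr2 sqr_sqrtr //; ring.
Qed.

Lemma bessel_unit y : dotp y y = 1 -> `|dotp u y| <= Num.sqrt (1 - dotp y a ^+ 2).
Proof.
move=> hy; have h := dotpvv_ge0 (y - (dotp y a *: a + dotp u y *: u)).
rewrite !dotpBl !dotpBr !dotpDl !dotpDr !dotpZl !dotpZr ha hu hy in h.
rewrite (dotpC a u) ua (dotpC a y) (dotpC y u) in h.
by rewrite -sqrtr_sqr ler_sqrt; nra.
Qed.

Lemma dotp_meridian_bounds s y (t := dotp y a) : dotp y y = 1 ->
  dotp (meridian a u s) (meridian a (- u) t) <= dotp (meridian a u s) y
    <= dotp (meridian a u s) (meridian a u t).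
Proof.
move=> hy; have := bessel_unit hy; rewrite -/t => /ler_normlP[uyN uy].
have sq_ge0 := sqrtr_ge0 (1 - s ^+ 2).
rewrite !dotp_meridian !dotpDr !dotpZr !dotpNr ha hu (dotpC a u) ua (dotpC a y) -/t.
by rewrite oppr0 !mulr0 !addr0 add0r !mulr1 mulrN1; apply/andP; split; nra.
Qed.

End Frame.

Lemma gdist_meridian_bounds a u s y (t := dotp y a) :
  dotp a a = 1 -> dotp u u = 1 -> dotp u a = 0 -> -1 <= s <= 1 -> dotp y y = 1 ->
  gdist (meridian a u s) (meridian a u t) <= gdist (meridian a u s) y
    <= gdist (meridian a u s) (meridian a (- u) t).
Proof.
move=> ha hu ua hs hy; have ht : -1 <= t <= 1 by rewrite /t dotp_unit_bound.
have hnu : dotp (- u) (- u) = 1 by rewrite dotpNN.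
have nua : dotp (- u) a = 0 by rewrite dotpNl ua oppr0.
have /andP[lo hi] := dotp_meridian_bounds ha hu ua s hy.
by apply/andP; split; apply: acos_antitone; rewrite ?dotp_unit_bound ?meridian_unit.
Qed.

Lemma meridian_decomp j (V : 'M[R]_(j, k)) a x :
  dotp a a = 1 -> dotp x x = 1 -> (1 < \rank V)%N -> (a <= V)%MS -> (x <= V)%MS ->
  exists u, [/\ dotp u u = 1, dotp u a = 0, (u <= V)%MS & x = meridian a u (dotp x a)].
Proof.
move=> ha hx rV aV xV; set t := dotp x a; pose r := x - t *: a.
have rr : dotp r r = 1 - t ^+ 2.
  rewrite /r !dotpBl !dotpBr !dotpZl !dotpZr ha hx (dotpC a x) -/t; ring.
have ra : dotp r a = 0 by rewrite /r dotpBl dotpZl ha mulr1 subrr.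
have xE : x = t *: a + r by rewrite addrC subrK.
have [r0|nr] := eqVneq r 0.
  have [u [hu ua uV]] := exists_unit_orth_sub a rV.
  have t2 : 1 - t ^+ 2 = 0 by rewrite -rr; apply/eqP; rewrite dotpvv_eq0 r0.
  by exists u; split; rewrite // /meridian t2 sqrtr0 scale0r addr0 {1}xE r0 addr0.
have sq_gt0 : 0 < Num.sqrt (1 - t ^+ 2) by rewrite -rr sqrtr_gt0 dotpvv_gt0.
exists (normalize r); split.
- exact: normalize_unit.
- by rewrite dotpZl ra mulr0.
- by rewrite scalemx_sub // /r -scaleNr addmx_sub ?scalemx_sub.
- by rewrite /meridian /normalize rr scalerA mulfV ?gt_eqF // scale1r.
Qed.

End Meridian.

Lemma meridian_great_sphere (R : realType) (k j : nat) (V : 'M[R]_(j, k.+1))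
    (a u : 'rV[R]_k.+1) t :
  dotp a a = 1 -> dotp u u = 1 -> dotp u a = 0 -> -1 <= t <= 1 ->
  (a <= V)%MS -> (u <= V)%MS -> great_sphere V (meridian a u t).
Proof. by move=> ha hu ua ht aV uV; split; [exact: meridian_unit | exact: meridian_sub]. Qed.

Section Rotation.
Variables (R : realType) (m : nat).
Implicit Types a p u v w x : 'rV[R]_m.+3.

Lemma exists_unit_orth2 a b : exists v, [/\ dotp v v = 1, dotp v a = 0 & dotp v b = 0].
Proof.
have rK : (1 < \rank (kermx b^T))%N.
  by rewrite mxrank_ker mxrank_tr; have := rank_leq_row b; lia.
have [v [hv va vK]] := exists_unit_orth_sub a rK.
by exists v; split => //; apply/eqP; rewrite -sub_kermx_tr.
Qed.

Lemma exists_rotation_fix a w u :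
  dotp w w = 1 -> dotp u u = 1 -> dotp w a = 0 -> dotp u a = 0 ->
  exists M, [/\ rotation M, a *m M = a & w *m M = u].
Proof.
move=> hw hu wa ua; have [->|nwu] := eqVneq w u.
  by exists 1%:M; split; rewrite ?mulmx1 //; exact: rotation1.
(* The reflection across [w - u] swaps [w] and [u]; the reflection across a
   vector orthogonal to [a] and [u], which exists in dimension at least 3,
   restores orientation. *)
have [v [hv va vu]] := exists_unit_orth2 a u.
have nv : v != 0 by rewrite -dotpvv_eq0 hv oner_eq0.
exists (refl (w - u) *m refl v); split.
- by apply: rotation_refl2; rewrite // subr_eq0.
- have a_wu : dotp a (w - u) = 0.
    by rewrite dotpBr (dotpC a w) (dotpC a u) wa ua subrr.
  by rewrite mulmxA !refl_fix // dotpC.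
- by rewrite mulmxA refl_swap ?hw ?hu // refl_fix // dotpC.
Qed.

Lemma exists_rotation_meridian a p u :
  dotp a a = 1 -> dotp p p = 1 -> dotp u u = 1 -> dotp u a = 0 ->
  exists M, [/\ rotation M, a *m M = a & p *m M = meridian a u (dotp p a)].
Proof.
move=> ha hp hu ua; have r1 : (1 < \rank (1%:M : 'M[R]_m.+3))%N by rewrite mxrank1.
have [w [hw wa _ pE]] := meridian_decomp ha hp r1 (submx1 a) (submx1 p).
have [M [rM aM wM]] := exists_rotation_fix hw hu wa ua.
by exists M; split; rewrite // {1}pE meridian_mulmx aM wM.
Qed.

Lemma exists_slice a x : exists V : 'M[R]_(m.+2, m.+3),
  [/\ \rank V = m.+2, (a <= V)%MS & (x <= V)%MS].
Proof.
have [v [hv va vx]] := exists_unit_orth2 a x.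
have rK : \rank (kermx v^T) = m.+2.
  by rewrite mxrank_ker mxrank_tr rank_rV -dotpvv_eq0 hv oner_eq0.
pose V := castmx (rK, erefl m.+3) (row_base (kermx v^T)).
have eV : (V :=: kermx v^T)%MS := eqmx_trans (eqmx_cast _ _) (eq_row_base _).
by exists V; rewrite !eV !sub_kermx_tr (dotpC a) (dotpC x) va vx.
Qed.

End Rotation.

Section DistDiam.
Variables (R : realType) (k : nat).
Implicit Types (x y z p q : 'rV[R]_k.+1) (Q : set 'rV[R]_k.+1).

Lemma gdist_bounds x y : dotp x x = 1 -> dotp y y = 1 -> 0 <= gdist x y <= pi.
Proof. by move=> hx hy; rewrite acos_ge0 ?acos_lepi ?dotp_unit_bound. Qed.

Lemma dist_to_le Q z p : Q `<=` @sphere R k -> dotp z z = 1 -> Q p ->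
  dist_to Q z <= gdist z p.
Proof.
move=> QS hz Qp; apply: ge_inf; last by exists p.
by exists 0 => _ [q Qq <-]; case/andP: (gdist_bounds hz (QS _ Qq)).
Qed.

Lemma lb_le_dist_to Q z c p0 : Q p0 -> (forall p, Q p -> c <= gdist z p) ->
  c <= dist_to Q z.
Proof.
move=> Qp0 lb; apply: lb_le_inf; first by exists (gdist z p0), p0.
by move=> _ [q Qq <-]; apply: lb.
Qed.

Lemma dist_to_bounds Q z p0 : Q `<=` @sphere R k -> dotp z z = 1 -> Q p0 ->
  0 <= dist_to Q z <= pi.
Proof.
move=> QS hz Qp0; apply/andP; split.
  by apply: (lb_le_dist_to Qp0) => p Qp; case/andP: (gdist_bounds hz (QS _ Qp)).
apply: le_trans (dist_to_le QS hz Qp0) _.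
by case/andP: (gdist_bounds hz (QS _ Qp0)).
Qed.

Lemma gdist_le_diam Q p q : Q `<=` @sphere R k -> Q p -> Q q -> gdist p q <= diam Q.
Proof.
move=> QS Qp Qq; apply: ub_le_sup; last by exists (p, q).
by exists pi => _ [[p1 q1] [/= Q1 Q2] <-]; case/andP: (gdist_bounds (QS _ Q1) (QS _ Q2)).
Qed.

Lemma diam_le_ub Q c p0 : Q p0 -> (forall p q, Q p -> Q q -> gdist p q <= c) ->
  diam Q <= c.
Proof.
move=> Qp0 ub; apply: ge_sup; first by exists (gdist p0 p0), (p0, p0).
by move=> _ [[p1 q1] [/= Q1 Q2] <-]; apply: ub.
Qed.

Lemma diam_bounds Q p0 : Q `<=` @sphere R k -> Q p0 -> 0 <= diam Q <= pi.
Proof.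
move=> QS Qp0; apply/andP; split.
  apply: le_trans (gdist_le_diam QS Qp0 Qp0).
  by case/andP: (gdist_bounds (QS _ Qp0) (QS _ Qp0)).
apply: (diam_le_ub Qp0) => p q Qp Qq.
by case/andP: (gdist_bounds (QS _ Qp) (QS _ Qq)).
Qed.

Definition dist_half_diam Q x := dist_to Q x + diam Q / 2.

Lemma Delta_sub (X Y : set 'rV[R]_k.+1) g : Y `<=` X -> Delta X g -> Delta Y g.
Proof.
move=> YX [[M gM] tri]; split; first by exists M => x /YX; apply: gM.
by move=> x y /YX Xx /YX Xy; apply: tri.
Qed.

End DistDiam.

Section RotationInvariant.
Variables (R : realType) (m : nat) (P : set 'rV[R]_m.+3) (a : 'rV[R]_m.+3).
Hypotheses (PS : P `<=` @sphere R m.+2) (Pa : P a).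
Hypothesis P_rotation : forall M : 'M[R]_m.+3, rotation M -> a *m M = a ->
  forall x, P (x *m M) <-> P x.

Let ha : dotp a a = 1 := PS Pa.

Lemma dist_to_rotation M z : rotation M -> a *m M = a -> dotp z z = 1 ->
  dist_to P (z *m M) = dist_to P z.
Proof.
have dist_le M' z' : rotation M' -> a *m M' = a -> dotp z' z' = 1 ->
    dist_to P (z' *m M') <= dist_to P z'.
  move=> rM aM hz; apply: (lb_le_dist_to Pa) => p Pp.
  rewrite /gdist -(dotp_rotation z' p rM); apply: dist_to_le => //.
    by rewrite dotp_rotation.
  exact/(P_rotation rM aM).
move=> rM aM hz; apply/eqP; rewrite eq_le dist_le //=.
have hzM : dotp (z *m M) (z *m M) = 1 by rewrite dotp_rotation.
have := dist_le _ _ (rotation_tr rM) (rotation_fix_tr rM aM) hzM.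
by rewrite -mulmxA (proj1 rM) mulmx1.
Qed.

Section Slice.
Variables (j : nat) (V : 'M[R]_(j, m.+3)).
Hypotheses (rV : (1 < \rank V)%N) (aV : (a <= V)%MS).

Let PV := P `&` great_sphere V.
Let PV_sphere : PV `<=` @sphere R m.+2 := subset_trans (@subIsetl _ _ _) PS.
Let PVa : PV a. Proof. by split; last split. Qed.

Lemma exists_rotation_into_slice p u :
  P p -> dotp u u = 1 -> dotp u a = 0 -> (u <= V)%MS ->
  exists M, [/\ rotation M, a *m M = a, p *m M = meridian a u (dotp p a) & PV (p *m M)].
Proof.
move=> Pp hu ua uV; have hp := PS Pp.
have [M [rM aM pM]] := exists_rotation_meridian ha hp hu ua.
exists M; split => //; split; first exact/(P_rotation rM aM).
by rewrite pM; apply: meridian_great_sphere; rewrite // dotp_unit_bound.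
Qed.

Lemma dist_to_slice z : great_sphere V z -> dist_to P z = dist_to PV z.
Proof.
move=> [hz zV]; apply/eqP; rewrite eq_le; apply/andP; split.
  by apply: (lb_le_dist_to PVa) => p [Pp _]; apply: dist_to_le.
apply: (lb_le_dist_to Pa) => p Pp.
have [u [hu ua uV zE]] := meridian_decomp ha hz rV aV zV.
have [M [_ _ pM PVpM]] := exists_rotation_into_slice Pp hu ua uV.
apply: le_trans (dist_to_le PV_sphere hz PVpM) _.
have hs : -1 <= dotp z a <= 1 by rewrite dotp_unit_bound.
have /andP[+ _] := gdist_meridian_bounds ha hu ua hs (PS Pp).
by rewrite -zE -pM.
Qed.

Lemma diam_slice : diam P = diam PV.
Proof.
apply/eqP; rewrite eq_le; apply/andP; split; last first.
  by apply: (diam_le_ub PVa) => p q [Pp _] [Pq _]; apply: gdist_le_diam.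
apply: (diam_le_ub Pa) => p q Pp Pq.
have [u [hu ua uV]] := exists_unit_orth_sub a rV.
have hnu : dotp (- u) (- u) = 1 by rewrite dotpNN.
have nua : dotp (- u) a = 0 by rewrite dotpNl ua oppr0.
have nuV : (- u <= V)%MS by rewrite eqmx_opp.
have [M [rM aM pM PVpM]] := exists_rotation_into_slice Pp hu ua uV.
have [N [_ _ qN PVqN]] := exists_rotation_into_slice Pq hnu nua nuV.
(* Rotate [p] onto the meridian through [u]: the image of [q] is then at most
   as far from it as the point of the same height on the opposite meridian. *)
have hqM : dotp (q *m M) (q *m M) = 1 by rewrite dotp_rotation // PS.
have qMa : dotp (q *m M) a = dotp q a by rewrite -{1}aM dotp_rotation.
have hs : -1 <= dotp p a <= 1 by rewrite dotp_unit_bound // PS.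
have /andP[_] := gdist_meridian_bounds ha hu ua hs hqM.
rewrite -pM qMa -qN /gdist dotp_rotation // => pq_le.
exact: le_trans pq_le (gdist_le_diam PV_sphere PVpM PVqN).
Qed.

Lemma dist_half_diam_slice z : great_sphere V z -> dist_half_diam P z = dist_half_diam PV z.
Proof. by move=> Vz; rewrite /dist_half_diam dist_to_slice // diam_slice. Qed.

End Slice.

Hypothesis P_slice : forall V : 'M[R]_(m.+2, m.+3), \rank V = m.+2 -> (a <= V)%MS ->
  admissible (great_sphere V) (P `&` great_sphere V).

Lemma dist_half_diam_triangle x y : dotp x x = 1 -> dotp y y = 1 ->
  gdist x y <= dist_half_diam P x + dist_half_diam P y.
Proof.
move=> hx hy; have [V [rV aV xV]] := exists_slice a x.
have rV1 : (1 < \rank V)%N by rewrite rV.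
have [u [hu ua uV xE]] := meridian_decomp ha hx rV1 aV xV.
have hnu : dotp (- u) (- u) = 1 by rewrite dotpNN.
have nua : dotp (- u) a = 0 by rewrite dotpNl ua oppr0.
have [M [rM aM yM]] := exists_rotation_meridian ha hy hnu nua.
have VyM : great_sphere V (y *m M).
  by rewrite yM; apply: meridian_great_sphere; rewrite ?dotpNN ?eqmx_opp ?dotp_unit_bound.
have -> : dist_half_diam P y = dist_half_diam P (y *m M).
  by rewrite /dist_half_diam dist_to_rotation.
rewrite !(dist_half_diam_slice rV1 aV) //.
have [[_ triV] _] := P_slice rV aV.
apply: le_trans (triV _ _ _ VyM) => //.
have hs : -1 <= dotp x a <= 1 by rewrite dotp_unit_bound.
have /andP[_] := gdist_meridian_bounds ha hu ua hs hy.
by rewrite -xE -yM.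
Qed.

Lemma Delta_dist_half_diam : Delta (@sphere R m.+2) (dist_half_diam P).
Proof.
split; last exact: dist_half_diam_triangle.
exists (pi + pi) => x hx; rewrite /dist_half_diam.
have /andP[? ?] := dist_to_bounds PS hx Pa; have /andP[? ?] := diam_bounds PS Pa.
by rewrite ger0_norm; lra.
Qed.

Lemma dist_half_diam_minimal g : Delta (@sphere R m.+2) g ->
  (forall x, dotp x x = 1 -> g x <= dist_half_diam P x) ->
  forall x, dotp x x = 1 -> g x = dist_half_diam P x.
Proof.
move=> Dg g_le x hx.
have [V [rV aV xV]] := exists_slice a x.
have rV1 : (1 < \rank V)%N by rewrite rV.
have [_ minV] := P_slice rV aV.
rewrite (dist_half_diam_slice rV1 aV) //; apply: minV => //.
  by apply: Delta_sub Dg => z [].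
move=> z Vz; have := g_le z (proj1 Vz).
by rewrite (dist_half_diam_slice rV1 aV Vz).
Qed.

End RotationInvariant.

Theorem proposition4p13 (R : realType) (n : nat) (hn : (1 <= n)%N)
  (P : set 'rV[R]_n.+2) (a : 'rV[R]_n.+2) :
  P `<=` @sphere R n.+1 ->
  P a ->
  (forall M : 'M[R]_n.+2, rotation M -> a *m M = a ->
     forall x, P (x *m M) <-> P x) ->
  (forall V : 'M[R]_(n.+1, n.+2), \rank V = n.+1 -> (a <= V)%MS ->
     admissible (great_sphere V) (P `&` great_sphere V)) ->
  admissible (@sphere R n.+1) P.
Proof.
case: n hn P a => [//|m] _ P a PS Pa P_rotation P_slice.
split; first exact: (Delta_dist_half_diam PS Pa P_rotation P_slice).
exact: (dist_half_diam_minimal PS Pa P_rotation P_slice).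
Qed.
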